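(* Let $G$ be a graph with girth at least $5$ and $G\not\cong P_2$, and let $S\subseteq V(G)$ be an MLD-set of $G$. Then each $u\in S$ has at most one neighbor of degree $1$ in $V(G)\setminus S$; define $\overline u$ to be that neighbor if it exists and $\overline u=u$ otherwise. The set $\overline S=\{\overline u:u\in S\}$ is a doubly resolving set of $G$ with $|\overline S|=|S|$. Consequently, $\psi(G)\le\gamma_M(G)$.
   Context: All graphs are finite, simple, undirected and connected, with at least 2 vertices; $d(u,v)$ is the shortest-path distance; the girth is the length of a shortest cycle (infinite if acyclic). A set $S\subseteq V(G)$ is resolving if for all distinct $x,y\in V(G)$ there is $u\in S$ with $d(u,x)\ne d(u,y)$; dominating if every vertex not in $S$ has a neighbor in $S$. An MLD-set is a set both resolving and dominating; $\gamma_M(G)$ is its minimum size. Two vertices $u,v$ doubly resolve a pair $\{x,y\}$ if $d(u,x)-d(u,y)\ne d(v,x)-d(v,y)$. A set $S$ is a doubly resolving set if every pair of distinct vertices of $G$ is doubly resolved by two vertices of $S$; $\psi(G)$ is the minimum size of a doubly resolving set. *)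

From HB Require Import structures.
From mathcomp Require Import all_boot all_order all_algebra.
Set Implicit Arguments. Unset Strict Implicit. Unset Printing Implicit Defensive.

Section GraphDefs.
Variable T : finType.
Variable e : rel T.

Definition walk_len (x y : T) (n : nat) : bool :=
  [exists p : n.-tuple T, path e x p && (last x p == y)].

(* shortest-path distance: least n with a walk of length n (for a connected
   graph a shortest walk has length < #|T|) *)
Definition dist (x y : T) : nat := find (walk_len x y) (iota 0 #|T|).

Definition deg (x : T) : nat := #|[set z | e x z]|.

Definition has_cycle_len (k : nat) : Prop :=
  exists s : seq T, [/\ size s = k, 3 <= k, uniq s & cycle e s].

Definition girth_ge5 : Prop := forall k, k < 5 -> ~ has_cycle_len k.

Definition iso_P2 : Prop :=
  exists x y : T, [/\ x != y, e x y & forall z, z = x \/ z = y].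

Definition resolving (S : {set T}) : bool :=
  [forall x, forall y, (x != y) ==> [exists u in S, dist u x != dist u y]].

Definition dominating (S : {set T}) : bool :=
  [forall x, (x \notin S) ==> [exists u in S, e x u]].

Definition mld_set (S : {set T}) : bool := resolving S && dominating S.

Definition doubly_resolves (u v x y : T) : bool :=
  ((dist u x)%:Z - (dist u y)%:Z != (dist v x)%:Z - (dist v y)%:Z)%R.

Definition doubly_resolving (S : {set T}) : bool :=
  [forall x, forall y, (x != y) ==>
     [exists u in S, exists v in S, doubly_resolves u v x y]].

(* minimum sizes (the whole vertex set is both an MLD-set and a doubly
   resolving set, so these minima are over nonempty families) *)
Definition gamma_M : nat :=
  #|[arg min_(S < [set: T] | mld_set S) #|S|]|.

Definition psi : nat :=
  #|[arg min_(S < [set: T] | doubly_resolving S) #|S|]|.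

End GraphDefs.

From HB Require Import structures.
From mathcomp Require Import all_boot all_order all_algebra.
From mathcomp Require Import zify.
Import GRing.Theory.
Set Implicit Arguments. Unset Strict Implicit. Unset Printing Implicit Defensive.

(* Suppose [x <> y] is not doubly resolved by the image [bar @: S], i.e.
   [d(w,x) - d(w,y)] is the same for all [w] in it.  Swapping a vertex of [S]
   with its pendant neighbour shifts both distances by one, so unless [x] or
   [y] is such a pendant neighbour the difference is also constant on [S].
   Since [S] dominates and resolves, that forces one of [x], [y] to lie in [S]
   and the other to be a pendant neighbour of it outside [S], contradicting
   the choice of [bar].  If instead [x = bar u] is a pendant neighbour, then
   either [y = u], which forces [S = {u}] and [G = P_2], or [y] lies outside
   [S] with [u] as its only neighbour in [S]; not being pendant, [y] has
   another neighbour [z], and the vertex of [S] dominating [z] is at distance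
   2 from [y], which the constant difference turns into distance 0 from [x].
   Girth at least 5 excludes the triangles and 4-cycles met along the way. *)

Section Walks.
Variables (T : finType) (e : rel T).

Lemma walk_len0 x y : walk_len e x y 0 = (x == y).
Proof.
apply/existsP/eqP => [[t]|->]; first by rewrite tuple0 /= => /eqP.
by exists [tuple]; rewrite /= eqxx.
Qed.

Lemma walk_lenS x y n :
  walk_len e x y n.+1 = [exists z, e x z && walk_len e z y n].
Proof.
apply/existsP/existsP => [[t]|[z /andP[exz /existsP[t Ht]]]].
  case/tupleP: t => z t /= /andP[/andP[exz pt] lt].
  by exists z; rewrite exz; apply/existsP; exists t; rewrite pt.
by exists [tuple of z :: t]; rewrite /= exz.
Qed.

Lemma walk_len1 x y : walk_len e x y 1 = e x y.
Proof.
rewrite walk_lenS; apply/existsP/idP => [[z /andP[exz]]|exy].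
  by rewrite walk_len0 => /eqP <-.
by exists y; rewrite exy walk_len0 eqxx.
Qed.

Lemma walk_len_cat x y z m n :
  walk_len e x y m -> walk_len e y z n -> walk_len e x z (m + n).
Proof.
elim: m x => [|m IH] x; first by rewrite walk_len0 => /eqP ->.
rewrite walk_lenS => /existsP[w /andP[exw Hw]] Hyz.
by rewrite addSn walk_lenS; apply/existsP; exists w; rewrite exw (IH _ Hw Hyz).
Qed.

Lemma walk_lenC (e_sym : symmetric e) x y n :
  walk_len e x y n -> walk_len e y x n.
Proof.
elim: n x => [|n IH] x; first by rewrite !walk_len0 eq_sym.
rewrite walk_lenS => /existsP[z /andP[exz /IH Hzy]].
by rewrite -addn1; apply: walk_len_cat Hzy _; rewrite walk_len1 e_sym.
Qed.

Lemma connect_walk_len x y :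
  connect e x y -> exists2 n, n < #|T| & walk_len e x y n.
Proof.
case/connectP => p pp ->; case: (shortenP pp) => p' pp' up' _.
exists (size p'); last by apply/existsP; exists (in_tuple p'); rewrite /= pp' eqxx.
by have := max_card (mem (x :: p')); move/card_uniqP: up' => ->.
Qed.

End Walks.

Section Distance.
Variables (T : finType) (e : rel T).
Hypotheses (e_sym : symmetric e) (e_irr : irreflexive e).
Hypothesis e_conn : forall x y : T, connect e x y.

Let has_walk_len x y : has (walk_len e x y) (iota 0 #|T|).
Proof.
have [n ltn Hn] := connect_walk_len (e_conn x y).
by apply/hasP; exists n => //; rewrite mem_iota.
Qed.

Lemma dist_lt_card x y : dist e x y < #|T|.
Proof. by have := has_walk_len x y; rewrite has_find size_iota. Qed.

Lemma dist_walk_len x y : walk_len e x y (dist e x y).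
Proof. by have := nth_find 0 (has_walk_len x y); rewrite nth_iota ?dist_lt_card. Qed.

Lemma dist_le_walk_len x y n : walk_len e x y n -> dist e x y <= n.
Proof.
move=> Hn; case: (ltnP n #|T|) => [ltn|len]; last first.
  exact: ltnW (leq_trans (dist_lt_card x y) len).
rewrite leqNgt; apply/negP => /(before_find 0).
by rewrite nth_iota // add0n Hn.
Qed.

Lemma dist_eq0 x y : (dist e x y == 0) = (x == y).
Proof.
apply/eqP/eqP => [d0|<-]; first by have := dist_walk_len x y; rewrite d0 walk_len0 => /eqP.
by apply/eqP; rewrite -leqn0 dist_le_walk_len ?walk_len0.
Qed.

Lemma distxx x : dist e x x = 0.
Proof. by apply/eqP; rewrite dist_eq0. Qed.

Lemma distC x y : dist e x y = dist e y x.
Proof.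
by apply/eqP; rewrite eqn_leq !dist_le_walk_len // walk_lenC // dist_walk_len.
Qed.

Lemma dist_triangle x y z : dist e x z <= dist e x y + dist e y z.
Proof. exact/dist_le_walk_len/walk_len_cat/dist_walk_len/dist_walk_len. Qed.

Lemma dist_eq1 x y : (dist e x y == 1) = e x y.
Proof.
apply/eqP/idP => [d1|exy]; first by have := dist_walk_len x y; rewrite d1 walk_len1.
apply/eqP; rewrite eqn_leq dist_le_walk_len ?walk_len1 // lt0n dist_eq0.
by apply: contraTneq exy => ->; rewrite e_irr.
Qed.

Lemma dist_edge x y : e x y -> dist e x y = 1.
Proof. by rewrite -dist_eq1 => /eqP. Qed.

Lemma pendant_neighbor_uniq u x z : e u x -> deg e x = 1 -> e x z -> z = u.
Proof.
move=> eux /eqP/cards1P[w Hw] exz.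
have : u \in [set z | e x z] by rewrite inE e_sym.
have : z \in [set z | e x z] by rewrite inE.
by rewrite Hw !inE => /eqP -> /eqP ->.
Qed.

Lemma dist_pendant u x w :
  e u x -> deg e x = 1 -> w != x -> dist e w x = dist e w u + 1.
Proof.
move=> eux dx wx; apply/eqP; rewrite eqn_leq.
rewrite (leq_trans (dist_triangle w u x)) ?(dist_edge eux) //=.
rewrite [dist e w x]distC (distC w u) addn1; have := dist_walk_len x w.
have : dist e x w != 0 by rewrite dist_eq0 eq_sym.
case: (dist e x w) => [//|k _].
rewrite walk_lenS => /existsP[z /andP[exz]].
by rewrite (pendant_neighbor_uniq eux dx exz) ltnS => /dist_le_walk_len.
Qed.

Lemma other_neighbor y u : e y u -> deg e y != 1 -> exists2 z, e y z & z != u.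
Proof.
move=> eyu dy; case: (pickP [pred z | e y z && (z != u)]) => [z /andP[]|none].
  by exists z.
case/eqP: dy; apply/eqP/cards1P; exists u; apply/setP => z; rewrite !inE.
by case: eqVneq => [->|zu] //; have := none z; rewrite /= zu andbT.
Qed.

End Distance.

Section ShortCycles.
Variables (T : finType) (e : rel T).
Hypotheses (e_irr : irreflexive e) (girth5 : girth_ge5 e).

Lemma edge_neq x y : e x y -> x != y.
Proof. by apply: contraTneq => ->; rewrite e_irr. Qed.

Lemma girth5_no_triangle a b c : e a b -> e b c -> e c a -> False.
Proof.
move=> eab ebc eca; apply: (girth5 (k := 3)) => //; exists [:: a; b; c].
have ca := edge_neq eca.
by rewrite /= eab ebc eca !inE !negb_or (edge_neq eab) (edge_neq ebc) eq_sym ca.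
Qed.

Lemma girth5_no_square a b c d :
  e a b -> e b c -> e c d -> e d a -> a != c -> b != d -> False.
Proof.
move=> eab ebc ecd eda ac bd; apply: (girth5 (k := 4)) => //.
have da := edge_neq eda.
exists [:: a; b; c; d]; rewrite /= eab ebc ecd eda !inE !negb_or ac bd.
by rewrite (edge_neq eab) (edge_neq ebc) (edge_neq ecd) eq_sym da.
Qed.

End ShortCycles.

Section DistanceGap.
Variables (T : finType) (e : rel T).
Hypotheses (e_sym : symmetric e) (e_irr : irreflexive e).
Hypothesis e_conn : forall x y : T, connect e x y.

Definition dgap (w x y : T) : int := ((dist e w x)%:Z - (dist e w y)%:Z)%R.

Definition gap_const (W : {set T}) (x y : T) : Prop :=
  {in W &, forall v w, dgap v x y = dgap w x y}.

Lemma doubly_resolving_gap (W : {set T}) :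
  (forall x y, x != y -> ~ gap_const W x y) -> doubly_resolving e W.
Proof.
move=> HW; apply/forallP => x; apply/forallP => y; apply/implyP => xy.
apply: contraT => Hn; case: (HW x y xy) => v w vW wW.
apply/eqP; apply: contraNT Hn => Hvw.
by apply/existsP; exists v; rewrite vW /=; apply/existsP; exists w; rewrite wW.
Qed.

Lemma gap_constC (W : {set T}) x y : gap_const W x y -> gap_const W y x.
Proof. by move=> Hc v w vW wW; have := Hc v w vW wW; rewrite /dgap; lia. Qed.

Lemma gap_const_mem (W : {set T}) x y :
  x \in W -> y \in W -> gap_const W x y -> x = y.
Proof.
move=> xW yW /(_ x y xW yW); rewrite /dgap !distxx // (distC _ _ y x) // => Hxy.
by apply/eqP; rewrite -(dist_eq0 e_conn); apply/eqP; lia.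
Qed.

(* A pendant vertex sees every other vertex one step further than its
   neighbour does, so swapping them does not change distance differences. *)
Lemma dgap_pendant u p x y : e u p -> deg e p = 1 -> p != x -> p != y ->
  dgap p x y = dgap u x y.
Proof.
move=> eup dp px py; rewrite /dgap !(distC e_sym e_conn p).
rewrite (dist_pendant e_sym e_irr e_conn eup dp) 1?eq_sym //.
rewrite (dist_pendant e_sym e_irr e_conn eup dp) 1?eq_sym //.
by rewrite !PoszD opprD addrACA subrr addr0 !(distC e_sym e_conn u).
Qed.

End DistanceGap.

Section MLDSets.
Variables (T : finType) (e : rel T).
Hypotheses (e_sym : symmetric e) (e_irr : irreflexive e).
Hypothesis e_conn : forall x y : T, connect e x y.
Hypothesis girth5 : girth_ge5 e.
Variable S : {set T}.
Hypothesis HS : mld_set e S.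

Lemma mld_resolve x y : x != y -> exists2 w, w \in S & dist e w x != dist e w y.
Proof.
case/andP: HS => /forallP/(_ x)/forallP/(_ y)/implyP H _ /H/existsP[w /andP[wS Hw]].
by exists w.
Qed.

Lemma mld_dominate x : x \notin S -> exists2 w, w \in S & e x w.
Proof.
case/andP: HS => _ /forallP/(_ x)/implyP H /H/existsP[w /andP[wS Hw]].
by exists w.
Qed.

Lemma mld_pendant_uniq u x y : u \in S -> x \notin S -> y \notin S ->
  e u x -> e u y -> deg e x = 1 -> deg e y = 1 -> x = y.
Proof.
move=> uS xS yS eux euy dx dy; apply/eqP; apply: contraT => xy.
have [w wS] := mld_resolve xy.
have wx : w != x by apply: contraNneq xS => <-.
have wy : w != y by apply: contraNneq yS => <-.
rewrite (dist_pendant e_sym e_irr e_conn eux dx wx).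
by rewrite (dist_pendant e_sym e_irr e_conn euy dy wy) eqxx.
Qed.

Lemma mld_center_P2 u x : {in S, forall v, v = u} -> e u x -> iso_P2 e.
Proof.
move=> Su eux; exists u, x; split=> [|//|z]; first exact: (@edge_neq _ _ e_irr u x).
case: (eqVneq z u) => [->|zu]; [by left | right].
have [_ /Su -> ezu] : exists2 w, w \in S & e z w.
  by apply: mld_dominate; apply: contra zu => /Su ->.
apply/eqP; apply: contraT => zx; have [_ /Su ->] := mld_resolve zx.
by rewrite !(distC e_sym e_conn u) !dist_edge // e_sym.
Qed.

Lemma mld_gap_const_out x y :
  x \notin S -> y \notin S -> gap_const e S x y -> x = y.
Proof.
move=> xS yS Hc; apply/eqP; apply: contraT => xy.
have [a aS exa] := mld_dominate xS; have [b bS eyb] := mld_dominate yS.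
have [w wS /eqP w_res] := mld_resolve xy.
have ay : dist e a y != 0 by rewrite dist_eq0 //; apply: contraNneq yS => <-.
have bx : dist e b x != 0 by rewrite dist_eq0 //; apply: contraNneq xS => <-.
have := Hc a b aS bS; have := Hc a w aS wS.
rewrite /dgap (distC e_sym e_conn a x) (distC e_sym e_conn b y).
by rewrite (dist_edge e_irr e_conn exa) (dist_edge e_irr e_conn eyb); lia.
Qed.

Lemma mld_gap_const_neighbor x y b : x \in S -> y \notin S -> gap_const e S x y ->
  b \in S -> e y b -> b = x.
Proof.
move=> xS yS Hc bS eyb; have xy : dist e x y != 0.
  by rewrite dist_eq0 //; apply: contraNneq yS => <-.
have := Hc x b xS bS; rewrite /dgap distxx // (distC e_sym e_conn b y).
rewrite (dist_edge e_irr e_conn eyb) => E.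
by apply/eqP; rewrite -(dist_eq0 e_conn); apply/eqP; lia.
Qed.

Lemma mld_second_neighbor y u : y \notin S -> e y u ->
  {in S, forall b, e y b -> b = u} -> deg e y != 1 ->
  exists w z, [/\ w \in S, w != u, z != u, e y z & e z w] /\ dist e w y = 2.
Proof.
move=> yS eyu Sy dy; have [z eyz zu] := other_neighbor eyu dy.
have [w wS ezw] : exists2 w, w \in S & e z w.
  by apply: mld_dominate; apply: contra zu => zS; apply/eqP; apply: Sy.
have wu : w != u.
  (* otherwise [y z u] is a triangle *)
  apply: contraTneq ezw => ->; apply/negP => ezu.
  by apply: (girth5_no_triangle e_irr girth5 eyz ezu); rewrite e_sym.
exists w, z; split=> //; apply/eqP; rewrite eqn_leq.
have -> : dist e w y <= 2.
  rewrite (leq_trans (dist_triangle e_conn w z y)) // (distC e_sym e_conn w z).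
  rewrite (distC e_sym e_conn z y) (dist_edge e_irr e_conn ezw).
  by rewrite (dist_edge e_irr e_conn eyz).
have : dist e w y != 0 by rewrite dist_eq0 //; apply: contraNneq yS => <-.
have : dist e w y != 1 by rewrite dist_eq1 // e_sym; apply: contra wu => /Sy ->.
by lia.
Qed.

Lemma mld_gap_const_in_out x y : x \in S -> y \notin S -> gap_const e S x y ->
  e x y /\ deg e y = 1.
Proof.
move=> xS yS Hc; have Sy := mld_gap_const_neighbor xS yS Hc.
have [b bS eyb] := mld_dominate yS; have exy : e x y by rewrite -(Sy b) // e_sym.
split=> //; apply/eqP; apply: contraT => dy.
have eyx : e y x by rewrite e_sym.
have [w [z [[wS _ zx eyz ezw] dwy]]] := mld_second_neighbor yS eyx Sy dy.
have := Hc x w xS wS; rewrite /dgap distxx // dwy (dist_edge e_irr e_conn exy) => dwx.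
have ewx : e w x by rewrite -(dist_eq1 e_irr e_conn); apply/eqP; clear -dwx; lia.
exfalso; apply: (girth5_no_square e_irr girth5 ewx exy eyz ezw); last by rewrite eq_sym.
by apply: contraNneq yS => <-.
Qed.

End MLDSets.

Section PendantSwap.
Variables (T : finType) (e : rel T).
Hypotheses (e_sym : symmetric e) (e_irr : irreflexive e).
Hypothesis e_conn : forall x y : T, connect e x y.
Hypothesis girth5 : girth_ge5 e.
Variable S : {set T}.
Hypothesis HS : mld_set e S.

Definition pendant_swap (bar : T -> T) : Prop :=
  forall u, u \in S ->
    (bar u \notin S /\ e u (bar u) /\ deg e (bar u) = 1) \/
    ((forall x, x \notin S -> e u x -> deg e x <> 1) /\ bar u = u).

Lemma exists_pendant_swap : exists bar, pendant_swap bar.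
Proof.
exists (fun u => if [pick z | (z \notin S) && e u z && (deg e z == 1)] is Some z
                 then z else u).
move=> u uS; case: pickP => [z /andP[/andP[zS euz] /eqP dz]|none]; first by left.
by right; split=> // x xS eux dx; have := none x; rewrite /= xS eux dx eqxx.
Qed.

Variable bar : T -> T.
Hypothesis bar_spec : pendant_swap bar.

Lemma bar_fixed v : v \in S -> bar v \in S -> bar v = v.
Proof. by move=> vS; case: (bar_spec vS) => [[/negPf->]|[_ ->]]. Qed.

Lemma bar_pendant v : v \in S -> bar v \notin S -> e v (bar v) /\ deg e (bar v) = 1.
Proof. by move=> vS; case: (bar_spec vS) => [[_ //]|[_ ->]]; rewrite vS. Qed.

Lemma bar_inj : {in S &, injective bar}.
Proof.
move=> u v uS vS Euv; case: (boolP (bar u \in S)) => bu.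
  by rewrite -(bar_fixed uS bu) -(bar_fixed vS) // -Euv.
have bv : bar v \notin S by rewrite -Euv.
have [eu du] := bar_pendant uS bu; have [ev _] := bar_pendant vS bv.
by apply: esym; apply: (pendant_neighbor_uniq e_sym eu du); rewrite Euv e_sym.
Qed.

Lemma card_bar : #|bar @: S| = #|S|.
Proof. exact: card_in_imset bar_inj. Qed.

Lemma dgap_bar v x y : v \in S -> bar v != x -> bar v != y ->
  dgap e (bar v) x y = dgap e v x y.
Proof.
move=> vS bvx bvy; case: (boolP (bar v \in S)) => bS; first by rewrite bar_fixed.
by have [ev dv] := bar_pendant vS bS; apply: dgap_pendant.
Qed.

Lemma gap_const_bar x y : x \notin bar @: S :\: S -> y \notin bar @: S :\: S ->
  gap_const e (bar @: S) x y -> gap_const e S x y.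
Proof.
move=> xB yB Hc; have dgap_barS v : v \in S -> dgap e (bar v) x y = dgap e v x y.
  move=> vS; case: (boolP (bar v \in S)) => bS; first by rewrite bar_fixed.
  have bvB : bar v \in bar @: S :\: S by rewrite in_setD bS imset_f.
  by rewrite dgap_bar //; apply/negP => /eqP bvE; [move: xB | move: yB]; rewrite -bvE bvB.
by move=> v w vS wS; rewrite -(dgap_barS v) // -(dgap_barS w) //; apply: Hc; apply: imset_f.
Qed.

Lemma pendant_image_gap_parent u0 x : u0 \in S -> bar u0 = x -> x \notin S ->
  gap_const e (bar @: S) x u0 -> {in S, forall v, v = u0}.
Proof.
move=> u0S bx xS Hc v vS.
have [eux dx] : e u0 x /\ deg e x = 1 by rewrite -bx; apply: bar_pendant; rewrite // bx.
case: (eqVneq (bar v) x) => [bvx|bvx]; first by apply: bar_inj; rewrite ?bvx.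
have xbar : x \in bar @: S by rewrite -bx imset_f.
have := Hc x (bar v) xbar (imset_f _ vS).
rewrite /dgap distxx // (dist_pendant e_sym e_irr e_conn eux dx bvx).
by rewrite (distC e_sym e_conn x u0) (dist_edge e_irr e_conn eux); lia.
Qed.

Section PendantImage.
Variables (u0 x y : T).
Hypotheses (u0S : u0 \in S) (bar_u0 : bar u0 = x) (xS : x \notin S).
Hypotheses (yu0 : y != u0) (xy : x != y) (Hc : gap_const e (bar @: S) x y).

Let eux_dx : e u0 x /\ deg e x = 1.
Proof. by rewrite -bar_u0; apply: bar_pendant; rewrite // bar_u0. Qed.
Let eux : e u0 x. Proof. exact: eux_dx.1. Qed.
Let dx : deg e x = 1. Proof. exact: eux_dx.2. Qed.
Let xbar : x \in bar @: S. Proof. by rewrite -bar_u0 imset_f. Qed.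

Let bar_x v : v \in S -> bar v = x -> v = u0.
Proof. by move=> vS bvx; apply: bar_inj; rewrite ?bvx. Qed.

Let bar_y v : v \in S -> bar v != y.
Proof.
move=> vS; apply: contra_neq xy => bvy; apply: gap_const_mem Hc => //.
by rewrite -bvy imset_f.
Qed.

Let gap_x v : v \in S -> dgap e (bar v) x y = (- (dist e x y)%:Z)%R.
Proof.
by move=> vS; have := Hc xbar (imset_f _ vS); rewrite /dgap distxx //; lia.
Qed.

Let dxy0 : dist e x y != 0. Proof. by rewrite dist_eq0. Qed.

Lemma pendant_image_partner_out : y \notin S.
Proof.
apply/negP => yS; have byS : bar y \notin S.
  by apply: contra (bar_y yS) => /(bar_fixed yS) ->.
have [eyb db] := bar_pendant yS byS.
have bxn : x != bar y by rewrite eq_sym; apply: contra_neq yu0 => /(bar_x yS).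
have := gap_x yS; rewrite /dgap (distC e_sym e_conn _ x) (distC e_sym e_conn _ y).
rewrite (dist_pendant e_sym e_irr e_conn eyb db bxn) (dist_edge e_irr e_conn eyb) => E.
by move/eqP: dxy0; apply; clear -E; lia.
Qed.

Lemma pendant_image_partner_neighbor b : b \in S -> e y b -> b = u0.
Proof.
move=> bS eyb; apply: bar_x => //; apply/eqP; apply: contraT => bbx.
have := gap_x bS; rewrite dgap_bar ?(bar_y bS) // /dgap.
rewrite (distC e_sym e_conn b y) (dist_edge e_irr e_conn eyb) => E.
have : dist e b x == 0 by apply/eqP; clear -E dxy0; lia.
by rewrite dist_eq0 // => /eqP bx; move: xS; rewrite -bx bS.
Qed.

Lemma pendant_image_not_gap_const : False.
Proof.
have yS := pendant_image_partner_out.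
have [b bS eyb] := mld_dominate HS yS.
have eyu : e y u0 by rewrite -(pendant_image_partner_neighbor bS).
have euy : e u0 y by rewrite e_sym.
have dy : deg e y != 1.
  by apply: contra_neq xy => /(mld_pendant_uniq e_sym e_irr e_conn HS u0S xS yS eux euy dx).
have [w [z [[wS wu _ _ _] dwy]]] :=
  mld_second_neighbor e_sym e_irr e_conn girth5 HS yS eyu pendant_image_partner_neighbor dy.
have dxy : dist e x y = 2.
  rewrite distC // (dist_pendant e_sym e_irr e_conn eux dx) 1?eq_sym //.
  by rewrite (dist_edge e_irr e_conn eyu).
have bwx : bar w != x by apply: contra_neq wu; apply: bar_x wS.
have := gap_x wS; rewrite dgap_bar ?(bar_y wS) //.
rewrite /dgap dwy dxy => /eqP; rewrite subr_eq addNr eqz_nat dist_eq0 // => /eqP wx.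
by move: xS; rewrite -wx wS.
Qed.

End PendantImage.

Lemma pendant_image_gap_iso_P2 x y : x \in bar @: S :\: S -> x != y ->
  gap_const e (bar @: S) x y -> iso_P2 e.
Proof.
case/setDP=> /imsetP[u0 u0S ->] bS xy Hc.
case: (eqVneq y u0) => [yu0|yu0].
  have [eux _] := bar_pendant u0S bS; rewrite yu0 in Hc.
  apply: (mld_center_P2 e_sym e_irr e_conn HS _ eux).
  exact: pendant_image_gap_parent u0S erefl bS Hc.
by case: (pendant_image_not_gap_const u0S erefl bS yu0 xy Hc).
Qed.

Lemma pendant_free_gap_in_out x y : x \in S -> y \notin S -> y \notin bar @: S :\: S ->
  ~ gap_const e S x y.
Proof.
move=> xS yS yB Hc.
have [exy dy] := mld_gap_const_in_out e_sym e_irr e_conn girth5 HS xS yS Hc.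
case: (bar_spec xS) => [[bS [ebx dbx]] | [no_pendant _]]; last exact: no_pendant y yS exy dy.
have byx := mld_pendant_uniq e_sym e_irr e_conn HS xS bS yS ebx exy dbx dy.
by move: yB; rewrite -byx in_setD bS imset_f.
Qed.

Lemma bar_doubly_resolving : ~ iso_P2 e -> doubly_resolving e (bar @: S).
Proof.
move=> notP2; apply: doubly_resolving_gap => x y xy Hc.
case: (boolP (x \in bar @: S :\: S)) => [xB|xB].
  exact/notP2/(pendant_image_gap_iso_P2 xB xy).
case: (boolP (y \in bar @: S :\: S)) => [yB|yB].
  by apply/notP2/(pendant_image_gap_iso_P2 yB _ (gap_constC Hc)); rewrite eq_sym.
have HcS := gap_const_bar xB yB Hc.
case: (boolP (x \in S)) => xS; case: (boolP (y \in S)) => yS.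
- by move: xy; rewrite (gap_const_mem e_sym e_conn xS yS HcS) eqxx.
- exact: pendant_free_gap_in_out xS yS yB HcS.
- exact: pendant_free_gap_in_out yS xS xB (gap_constC HcS).
- by move: xy; rewrite (mld_gap_const_out e_sym e_irr e_conn HS xS yS HcS) eqxx.
Qed.

End PendantSwap.

Section Minima.
Variables (T : finType) (e : rel T).
Hypotheses (e_sym : symmetric e) (e_irr : irreflexive e).
Hypothesis e_conn : forall x y : T, connect e x y.

Lemma mld_setT : mld_set e [set: T].
Proof.
apply/andP; split; last by apply/forallP => x; rewrite in_setT.
apply/forallP => x; apply/forallP => y; apply/implyP => xy.
by apply/existsP; exists x; rewrite in_setT distxx // eq_sym dist_eq0.
Qed.

Lemma doubly_resolving_setT : doubly_resolving e [set: T].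
Proof.
apply: doubly_resolving_gap => x y xy Hc.
by move: xy; rewrite (gap_const_mem e_sym e_conn (in_setT x) (in_setT y) Hc) eqxx.
Qed.

Lemma psi_le_gamma_M : girth_ge5 e -> ~ iso_P2 e -> psi e <= gamma_M e.
Proof.
move=> girth5 notP2; rewrite /psi /gamma_M.
case: arg_minnP => [|D _ minD]; first exact: doubly_resolving_setT.
case: arg_minnP => [|S HS _]; first exact: mld_setT.
have [bar bar_spec] := exists_pendant_swap e S.
rewrite -(card_bar e_sym bar_spec); apply: minD.
by apply: (bar_doubly_resolving e_sym e_irr e_conn girth5 HS bar_spec).
Qed.

End Minima.

Theorem proposition10 (T : finType) (e : rel T)
  (e_sym : symmetric e) (e_irr : irreflexive e)
  (e_conn : forall x y : T, connect e x y) (card_T : 2 <= #|T|)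
  (girth5 : girth_ge5 e) (notP2 : ~ iso_P2 e)
  (S : {set T}) (HS : mld_set e S) :
  (forall u x y : T, u \in S -> x \notin S -> y \notin S ->
     e u x -> e u y -> deg e x = 1 -> deg e y = 1 -> x = y) /\
  (forall bar : T -> T,
     (forall u, u \in S ->
        (bar u \notin S /\ e u (bar u) /\ deg e (bar u) = 1) \/
        ((forall x, x \notin S -> e u x -> deg e x <> 1) /\ bar u = u)) ->
     doubly_resolving e (bar @: S) /\ #|bar @: S| = #|S|) /\
  psi e <= gamma_M e.
Proof.
split; first by move=> u x y; apply: (mld_pendant_uniq e_sym e_irr e_conn HS).
split; last exact: psi_le_gamma_M.
move=> bar bar_spec; split; last exact: (@card_bar _ _ e_sym S bar bar_spec).
exact: (@bar_doubly_resolving _ _ e_sym e_irr e_conn girth5 S HS bar bar_spec notP2).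
Qed.
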